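(* For any hypothesis class $\mathcal{H}\subseteq\{0,1\}^{\mathcal{X}}$, as a function of the time horizon $T$, $$\inf_{\mathcal{A}}\operatorname{M}_{\mathcal{A}}(T,\mathcal{H}) = \begin{cases}\Theta(1), & \text{if } \operatorname{W}(\mathcal{H})=1,\\ \Theta(\sqrt{T}), & \text{if } 2\le \operatorname{W}(\mathcal{H})<\infty,\\ \Theta(T), & \text{if } \operatorname{W}(\mathcal{H})=\infty,\end{cases}$$ where the infimum is over all (possibly randomized) online learners operating under apple tasting feedback.
   Context: Online binary classification: over rounds $t=1,\dots,T$, an adversary picks $(x_t,y_t)\in\mathcal{X}\times\{0,1\}$ and reveals $x_t$; the learner $\mathcal{A}$ (possibly randomized) outputs $\hat y_t=\mathcal{A}(x_t)\in\{0,1\}$ based on the history; under apple tasting feedback the learner observes $y_t$ only if $\hat y_t=1$. $\operatorname{M}_{\mathcal{A}}(T,\mathcal{H}) := \sup_{h\in\mathcal{H}}\sup_{x_1,\dots,x_T}\mathbb{E}\bigl[\sum_{t=1}^T \mathbb{1}\{\mathcal{A}(x_t)\neq h(x_t)\}\bigr]$ (labels $y_t=h(x_t)$, expectation over the learner's randomness). AL tree of width $w\in\mathbb{N}=\{1,2,\dots\}$ and depth $d$: a binary string $u$ is an internal node if $|u|<d$ and $u$ has fewer than $w$ ones; the tree assigns $x_u\in\mathcal{X}$ to each internal node. A path is a binary string $\sigma$ whose proper prefixes are all internal nodes but which is not itself one. The tree is shattered by $\mathcal{H}$ if for every path $\sigma$ some $h\in\mathcal{H}$ satisfies $h(x_{(\sigma_1,\dots,\sigma_{i-1})})=\sigma_i$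 for all $i\le|\sigma|$. $\operatorname{AL}_w(\mathcal{H})$ is the largest $d$ such that such a tree of width $w$ and depth $d$ is shattered ($\infty$ if unbounded, $0$ if none). The Effective width $\operatorname{W}(\mathcal{H})$ is the smallest $w\in\mathbb{N}$ with $\operatorname{AL}_w(\mathcal{H})<\infty$, and $\infty$ if none exists. *)

From HB Require Import structures.
From mathcomp Require Import all_boot all_order all_algebra.
From mathcomp Require Import all_classical all_reals.
Set Implicit Arguments.
Unset Strict Implicit.
Unset Printing Implicit Defensive.
Import Order.TTheory GRing.Theory Num.Theory.
Local Open Scope classical_set_scope.
Local Open Scope ring_scope.

(* A history entry for round s is (x_s, fb_s) with                           *)
(*   fb_s = None    : the learner predicted 0 (label not observed),          *)
(*   fb_s = Some y  : the learner predicted 1 and observed label y.          *)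
(* This records exactly what the learner sees (instances, its own past       *)
(* predictions, and the apple-tasting feedback).                             *)
(* A (possibly randomized) learner is given in behavioural form: from the    *)
(* observed history and the current instance it outputs the probability of   *)
(* predicting 1.                                                             *)

Definition history (X : Type) := seq (X * option bool).

Record learner (R : realType) (X : Type) := Learner {
  lprob :> history X -> X -> R;
  lprob_ge0 : forall hs x, 0 <= lprob hs x;
  lprob_le1 : forall hs x, lprob hs x <= 1
}.

Fixpoint exp_mistakes (R : realType) (X : Type) (A : learner R X)
  (h : X -> bool) (hs : history X) (xs : seq X) : R :=
  match xs with
  | [::] => 0
  | x :: xs' =>
      let p := A hs x in
      p * ((~~ h x)%:R + exp_mistakes A h (rcons hs (x, Some (h x))) xs')
      + (1 - p) * ((h x)%:R + exp_mistakes A h (rcons hs (x, None)) xs')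
  end.

Definition M (R : realType) (X : Type) (A : learner R X)
  (T : nat) (H : set (X -> bool)) : R :=
  sup [set exp_mistakes A h [::] xs | h in H & xs in [set xs : seq X | size xs = T]].

Definition opt_mistakes (R : realType) (X : Type) (H : set (X -> bool))
  (T : nat) : R :=
  inf [set M A T H | A in [set: learner R X]].

Definition internal (w d : nat) (u : seq bool) : bool :=
  (size u < d)%N && (count id u < w)%N.

Definition is_path (w d : nat) (s : seq bool) : Prop :=
  (forall i, (i < size s)%N -> internal w d (take i s)) /\ ~~ internal w d s.

Definition shattered (X : Type) (H : set (X -> bool)) (w d : nat)
  (tr : seq bool -> X) : Prop :=
  forall s, is_path w d s ->
    exists2 h, H h & forall i, (i < size s)%N -> h (tr (take i s)) = nth false s i.

(* AL_w(H) < oo : the depths of shattered width-w AL trees are bounded      *)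
(* (this includes the case where none is shattered, AL_w(H) = 0).           *)
Definition AL_finite (X : Type) (H : set (X -> bool)) (w : nat) : Prop :=
  exists D : nat, forall d : nat,
    (exists tr : seq bool -> X, shattered H w d tr) -> (d <= D)%N.

(* Effective width W(H): Some w = smallest w >= 1 with AL_w(H) < oo,        *)
(* None = oo.                                                                *)
Definition W_pred (X : Type) (H : set (X -> bool)) : pred nat :=
  fun w => `[< (0 < w)%N /\ AL_finite H w >].

Definition eff_width (X : Type) (H : set (X -> bool)) : option nat :=
  match pselect (exists w, W_pred H w) with
  | left ex => Some (ex_minn ex)
  | right _ => None
  end.

Definition bigO1 (R : realType) (f : nat -> R) : Prop :=
  exists C : R, 0 < C /\ exists T0 : nat, forall T, (T0 <= T)%N -> f T <= C.

Definition bigTheta (R : realType) (f g : nat -> R) : Prop :=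
  exists c C : R, [/\ 0 < c, 0 < C &
    exists T0 : nat, forall T, (T0 <= T)%N -> c * g T <= f T <= C * g T].

From mathcomp Require Import all_boot all_order all_algebra.
From mathcomp Require Import all_classical all_reals.
From mathcomp Require Import lra zify ring.
Import Order.TTheory GRing.Theory Num.Theory.
Set Implicit Arguments.
Unset Strict Implicit.
Unset Printing Implicit Defensive.
Local Open Scope ring_scope.
Local Open Scope classical_set_scope.

(* The learner keeps the version space V of the observed labels and a
   width budget a (initially w = W(H)), and ranks V by r = AL_a(V) + 1.  If the
   hypotheses of V labelling x by 0 have smaller rank, it predicts 1, and a mistake
   lowers r.  Otherwise it predicts 1 only with probability eps; if the label 1 is then
   revealed, V is restricted and the budget lowered to a - 1, and r drops as well,
   because otherwise the two restrictions of V would be the subtrees of a deeper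
   shattered tree.  With eps K >= 1 the potential (a - 1) K + r pays for every mistake
   but an expected eps per round, so the expected number of mistakes is at most
   (w - 1) K + AL_w(H) + 1 + eps T: take K = 1/eps = sqrt T, or eps = K = 0 when w = 1.

   If AL_T(H) >= T, labelling a shattered width-T tree along a uniformly
   random walk forces T/2 expected mistakes.  If AL_1(H) is unbounded, let c_0 ... c_(k-1)
   be the leftmost spine of a shattered width-1 tree, with k^2 <= T.  The sequence
   repeating each c_i k times with label 0, together with its k variants that label the
   block of c_j by 1 and stop there, are all realizable, and one of them forces k/2
   mistakes. *)

Section ConvexCombination.
Variable R : realType.
Implicit Types p a b c : R.

Lemma ler_convex_comb p a b (a' b' : R) : 0 <= p <= 1 -> a <= a' -> b <= b' ->
  p * a + (1 - p) * b <= p * a' + (1 - p) * b'.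
Proof.
move=> /andP[p0 p1] aa' bb'; apply: lerD; first exact: ler_wpM2l.
by apply: ler_wpM2l; rewrite ?subr_ge0.
Qed.

Lemma convex_comb_id p c : p * c + (1 - p) * c = c.
Proof. by rewrite -mulrDl addrC subrK mul1r. Qed.

Lemma convex_comb_le p a b c : 0 <= p <= 1 -> a <= c -> b <= c ->
  p * a + (1 - p) * b <= c.
Proof. by move=> p01 ac bc; rewrite -[leRHS](convex_comb_id p); exact: ler_convex_comb. Qed.

Lemma convex_comb_ge p a b c : 0 <= p <= 1 -> c <= a -> c <= b ->
  c <= p * a + (1 - p) * b.
Proof. by move=> p01 ca cb; rewrite -[leLHS](convex_comb_id p); exact: ler_convex_comb. Qed.

Lemma big_convex_comb (S : Type) (l : seq S) p a b (f g : S -> R) :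
  \sum_(s <- l) (p * (a + f s) + (1 - p) * (b + g s)) =
  p * ((size l)%:R * a + \sum_(s <- l) f s)
  + (1 - p) * ((size l)%:R * b + \sum_(s <- l) g s).
Proof.
elim: l => [|s l IH]; first by rewrite !big_nil !mul0r !addr0 !mulr0 addr0.
by rewrite !big_cons IH /= -addn1 natrD; ring.
Qed.

Lemma has_ge_average (I : Type) (l : seq I) (f : I -> R) c :
  (0 < size l)%N -> (size l)%:R * c <= \sum_(i <- l) f i -> has (fun i => c <= f i) l.
Proof.
elim: l => [|i l IH] //= _; rewrite big_cons -addn1 natrD mulrDl mul1r => le_cs.
apply/orP; have [|lt_fc] := leP c (f i); [by left | right].
case: l IH le_cs => [|j l] IH le_cs; first by rewrite big_nil mul0r in le_cs; lra.
by apply: IH => //; lra.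
Qed.

End ConvexCombination.

Section LabelledMistakes.
Variables (R : realType) (X : Type) (A : learner R X).

Fixpoint lab_mistakes (hs : history X) (ls : seq (X * bool)) : R :=
  if ls is (x, y) :: ls' then
    let p := A hs x in
    p * ((~~ y)%:R + lab_mistakes (rcons hs (x, Some y)) ls')
    + (1 - p) * (y%:R + lab_mistakes (rcons hs (x, None)) ls')
  else 0.

Lemma exp_mistakesE h hs xs :
  exp_mistakes A h hs xs = lab_mistakes hs [seq (x, h x) | x <- xs].
Proof. by elim: xs hs => //= x xs IH hs; rewrite !IH. Qed.

Lemma lprob01 hs x : 0 <= A hs x <= 1.
Proof. by rewrite lprob_ge0 lprob_le1. Qed.

Lemma lab_mistakes_ge0 hs ls : 0 <= lab_mistakes hs ls.
Proof.
elim: ls hs => [|[x y] ls IH] hs //=.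
by apply: convex_comb_ge; rewrite ?lprob01 ?addr_ge0.
Qed.

Lemma lab_mistakes_le_size hs ls : lab_mistakes hs ls <= (size ls)%:R.
Proof.
elim: ls hs => [|[x y] ls IH] hs //=.
rewrite -addn1 natrD [_ + 1]addrC.
by apply: convex_comb_le; rewrite ?lprob01 // lerD //; case: y.
Qed.

Lemma lab_mistakes_cat hs l1 l2 : lab_mistakes hs l1 <= lab_mistakes hs (l1 ++ l2).
Proof.
elim: l1 hs => [|[x y] l1 IH] hs /=; first exact: lab_mistakes_ge0.
by apply: ler_convex_comb; rewrite ?lprob01 ?lerD2l.
Qed.

End LabelledMistakes.

Section WorstCase.
Variables (R : realType) (X : Type) (H : set (X -> bool)).
Implicit Types (A : learner R X) (T : nat) (c : R).

Definition mistake_set (A : learner R X) T : set R :=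
  [set exp_mistakes A h [::] xs | h in H & xs in [set xs : seq X | size xs = T]].

Lemma mistake_set_ub A T : ubound (mistake_set A T) T%:R.
Proof.
move=> _ [h _ [xs /= <- <-]]; rewrite exp_mistakesE.
by rewrite -(size_map (fun x => (x, h x))) lab_mistakes_le_size.
Qed.

Lemma exp_mistakes_le_M A T h xs : H h -> size xs = T ->
  exp_mistakes A h [::] xs <= M A T H.
Proof.
move=> Hh sxs; apply: sup_upper_bound; last by exists h => //; exists xs.
by split; [exists (exp_mistakes A h [::] xs); exists h => //; exists xs
          | exists T%:R; exact: mistake_set_ub].
Qed.

Lemma M_le A T c : 0 <= c ->
  (forall h xs, H h -> size xs = T -> exp_mistakes A h [::] xs <= c) -> M A T H <= c.
Proof.
move=> c0 hc; have [ne|e] := pselect (mistake_set A T !=set0).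
  by apply: ge_sup => // _ [h Hh [xs /= sxs <-]]; exact: hc.
by rewrite /M sup_out // => -[].
Qed.

Lemma M_le_horizon A T : M A T H <= T%:R.
Proof.
by apply: M_le => // h xs Hh sxs; apply: mistake_set_ub; exists h => //; exists xs.
Qed.

Lemma M_ge0 A T : 0 <= M A T H.
Proof.
have [[_ [h Hh [xs /= sxs _]]]|e] := pselect (mistake_set A T !=set0).
  by apply: le_trans (exp_mistakes_le_M A Hh sxs); rewrite exp_mistakesE lab_mistakes_ge0.
by rewrite /M sup_out // => -[].
Qed.

Definition consistent (h : X -> bool) (l : seq (X * bool)) := all (fun e => h e.1 == e.2) l.

Lemma consistent_map h l : consistent h l -> [seq (x, h x) | x <- map fst l] = l.
Proof. by elim: l => //= -[x y] l IH /andP[/eqP /= -> /IH ->]. Qed.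

Lemma lab_mistakes_le_M (x0 : X) A T h l : H h -> consistent h l -> (size l <= T)%N ->
  lab_mistakes A [::] l <= M A T H.
Proof.
move=> Hh hl le_lT; pose xs := map fst l ++ nseq (T - size l) x0.
have sxs : size xs = T by rewrite size_cat size_map size_nseq subnKC.
apply: le_trans (exp_mistakes_le_M A Hh sxs).
by rewrite exp_mistakesE map_cat consistent_map // lab_mistakes_cat.
Qed.

Definition zero_learner : learner R X :=
  @Learner R X (fun _ _ => 0) (fun _ _ => lexx 0) (fun _ _ => @ler01 R).

Lemma opt_mistakes_le_M A T : opt_mistakes R H T <= M A T H.
Proof.
apply: ge_inf; last by exists A.
by exists 0 => _ [B _ <-]; exact: M_ge0.
Qed.

Lemma opt_mistakes_ge T c : (forall A, c <= M A T H) -> c <= opt_mistakes R H T.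
Proof.
move=> hc; apply: lb_le_inf; first by exists (M zero_learner T H); exists zero_learner.
by move=> _ [B _ <-].
Qed.

End WorstCase.

Section Shattering.
Variable X : Type.
Implicit Types (V : set (X -> bool)) (w d : nat) (s u : seq bool).

Definition prefixes_internal w d s := forall i, (i < size s)%N -> internal w d (take i s).

Lemma prefixes_internal_extend w d s : prefixes_internal w d s ->
  exists t, is_path w d (s ++ t).
Proof.
move: {2}(d - size s)%N (leqnn (d - size s)) => n.
elim: n s => [|n IH] s hn hs.
  by exists [::]; rewrite cats0; split=> //; apply/negP => /andP[]; lia.
have [hi|hni] := boolP (internal w d s); last by exists [::]; rewrite cats0.
have hn' : (d - size (rcons s false) <= n)%N.
  by move: hi => /andP[]; rewrite size_rcons; lia.
have hs' : prefixes_internal w d (rcons s false).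
  move=> i; rewrite size_rcons ltnS leq_eqVlt => /orP[/eqP ->|lt_is].
    by rewrite -cats1 take_cat ltnn subnn take0 cats0.
  by rewrite -cats1 take_cat lt_is; apply: hs.
have [t ht] := IH _ hn' hs'.
by exists (false :: t); rewrite -cat_rcons.
Qed.

Lemma shattered_prefix V w d tr s : shattered V w d tr -> prefixes_internal w d s ->
  exists2 h, V h & forall i, (i < size s)%N -> h (tr (take i s)) = nth false s i.
Proof.
move=> sh hs; have [t pt] := prefixes_internal_extend hs.
have [h Vh hh] := sh _ pt; exists h => // i lt_is.
have := hh i; rewrite size_cat takel_cat ?(ltnW lt_is) // nth_cat lt_is; apply.
exact: leq_trans lt_is (leq_addr _ _).
Qed.

Lemma shattered_spine V d tr j b : shattered V 1 d tr -> (j < d)%N ->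
  exists2 h, V h &
    (forall i, (i < j)%N -> h (tr (nseq i false)) = false) /\ h (tr (nseq j false)) = b.
Proof.
move=> sh lt_jd; set s := rcons (nseq j false) b.
have take_s i : (i <= j)%N -> take i s = nseq i false.
  by move=> le_ij; rewrite /s -cats1 takel_cat ?size_nseq // take_nseq.
have [|h Vh hh] := shattered_prefix sh (s := s).
  move=> i; rewrite size_rcons size_nseq ltnS => le_ij.
  by rewrite take_s // /internal size_nseq count_nseq mul0n (leq_ltn_trans le_ij).
exists h => //; split.
  move=> i lt_ij; have := hh i; rewrite size_rcons size_nseq ltnS take_s ?(ltnW lt_ij) //.
  by rewrite nth_rcons size_nseq lt_ij nth_nseq lt_ij => ->.
have := hh j; rewrite size_rcons size_nseq ltnS take_s //.
by rewrite nth_rcons size_nseq ltnn eqxx => ->.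
Qed.

Definition shatters V w d := exists tr, shattered V w d tr.

Lemma shatters_le_depth V w d d' : (d' <= d)%N -> shatters V w d -> shatters V w d'.
Proof.
move=> le_d [tr sh]; exists tr => s [hs _].
apply: shattered_prefix sh _ => i /hs /andP[lt_id lt_cw].
by rewrite /internal lt_cw andbT (leq_trans lt_id).
Qed.

Lemma shatters_sub V V' w d : V `<=` V' -> shatters V w d -> shatters V' w d.
Proof. by move=> sVV' [tr sh]; exists tr => s /sh[h /sVV' V'h hh]; exists h. Qed.

Lemma shatters_width0 (x : X) V h d : V h -> shatters V 0 d.
Proof.
move=> Vh; exists (fun _ => x) => -[|b s] [hs _]; exists h => //.
by have := hs 0%N isT; rewrite /internal ltn0 andbF.
Qed.

Lemma shatters_depth0 (x : X) V h w : V h -> shatters V w 0.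
Proof.
move=> Vh; exists (fun _ => x) => -[|b s] [hs _]; exists h => //.
by have := hs 0%N isT; rewrite /internal ltn0.
Qed.

Definition restrict V (x : X) (y : bool) : set (X -> bool) := [set g | V g /\ g x = y].

Lemma restrict_sub V x y : restrict V x y `<=` V.
Proof. by move=> g []. Qed.

Lemma internal_cons w d b u : (0 < w)%N ->
  internal w d.+1 (b :: u) = internal (w - b) d u.
Proof. by move=> w0; rewrite /internal /=; case: b => /=; lia. Qed.

Lemma shatters_branch V x w d : (0 < w)%N ->
  shatters (restrict V x false) w d -> shatters (restrict V x true) w.-1 d ->
  shatters V w d.+1.
Proof.
move=> w0 [tr0 sh0] [tr1 sh1].
exists (fun u => if u is b :: u' then (if b then tr1 else tr0) u' else x).
move=> [|b s] [hs hns]; first by move: hns; rewrite /internal /= w0.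
have ps : is_path (w - b) d s.
  split; last by rewrite -internal_cons.
  by move=> i lt_is; rewrite -internal_cons //; exact: (hs i.+1).
case: b hs hns ps => _ _ ps.
  rewrite subn1 in ps; have [h [Vh hx] hh] := sh1 s ps.
  by exists h => // -[|i] /=; rewrite ?ltnS => // /hh.
rewrite subn0 in ps; have [h [Vh hx] hh] := sh0 s ps.
by exists h => // -[|i] /=; rewrite ?ltnS => // /hh.
Qed.
End Shattering.

Section ALRank.
Variable X : Type.
Implicit Types (V : set (X -> bool)) (w d : nat).

(* [al_rank V w] is the least depth of a width-w tree that V does not shatter, i.e.
   AL_w(V) + 1 for nonempty V; it is a junk 0 if V shatters trees of every depth. *)
Definition al_rank V w : nat :=
  if pselect (exists d, ~~ `[< shatters V w d >]) is left e then ex_minn e else 0.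

Lemma al_rankP V w D : ~ shatters V w D ->
  forall d, shatters V w d <-> (d < al_rank V w)%N.
Proof.
move=> nD d; rewrite /al_rank; case: pselect => [e|ne]; last first.
  by exfalso; apply: ne; exists D; apply/asboolPn.
case: ex_minnP => m /asboolPn nm minm; split => [Sd|lt_dm].
  by rewrite ltnNge; apply/negP => /shatters_le_depth/(_ Sd).
have [//|nd] := pselect (shatters V w d).
by have := minm d (introT (asboolPn _) nd); rewrite leqNgt lt_dm.
Qed.

Lemma al_rank_le V w D : ~ shatters V w D -> (al_rank V w <= D)%N.
Proof. by move=> nD; rewrite leqNgt; apply/negP => /(al_rankP nD D). Qed.

Lemma al_rank_gt0 (x : X) V h w D : ~ shatters V w D -> V h -> (0 < al_rank V w)%N.
Proof. by move=> nD Vh; apply/(al_rankP nD); exact: shatters_depth0 x _ _ _ Vh. Qed.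

Lemma not_shatters_width_gt0 (x : X) V h w d : V h -> ~ shatters V w d -> (0 < w)%N.
Proof. by case: w => // Vh; case; exact: shatters_width0 x _ h _ Vh. Qed.

Lemma al_rank_sub V V' w D : V' `<=` V -> ~ shatters V w D ->
  (al_rank V' w <= al_rank V w)%N.
Proof.
move=> sV'V nD; have nD' : ~ shatters V' w D by move/(shatters_sub sV'V).
case r': (al_rank V' w) => [//|r].
have /(shatters_sub sV'V) : shatters V' w r by apply/(al_rankP nD'); rewrite r'.
by move/(al_rankP nD).
Qed.

(* If labelling x by 0 does not lower the rank, the 1-subtree cannot reach depth
   rank - 1 at width w - 1: otherwise [shatters_branch] would build a deeper tree. *)
Lemma restrict_true_not_shatters V x w D : ~ shatters V w D -> (0 < w)%N ->
  restrict V x true !=set0 -> (al_rank V w <= al_rank (restrict V x false) w)%N ->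
  ~ shatters (restrict V x true) w.-1 (al_rank V w).-1.
Proof.
move=> nD w0 [h [Vh _]] le_r S1.
have r0 := al_rank_gt0 x nD Vh.
have S0 : shatters (restrict V x false) w (al_rank V w).-1.
  apply/(al_rankP (D := D)); first by move/(shatters_sub (@restrict_sub _ _ _ _)).
  by rewrite prednK.
by have /(al_rankP nD) := shatters_branch w0 S0 S1; rewrite prednK // ltnn.
Qed.

End ALRank.

Section RankLearner.
Variables (R : realType) (X : Type) (H : set (X -> bool)) (w : nat) (eps : R).
Hypothesis eps01 : 0 <= eps <= 1.

Definition lstate := (set (X -> bool) * nat)%type.
Implicit Types (st : lstate) (h : X -> bool) (x : X).

Definition rank_drops st x : bool :=
  (al_rank (restrict st.1 x false) st.2 < al_rank st.1 st.2)%N.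

Definition update st (e : X * option bool) : lstate :=
  let: (x, fb) := e in
  if fb is Some y then
    if y && ~~ rank_drops st x then (restrict st.1 x true, st.2.-1)
    else (restrict st.1 x y, st.2)
  else st.

Definition learner_state (hs : history X) : lstate := foldl update (H, w) hs.

Definition predict_prob st x : R := if rank_drops st x then 1 else eps.

Lemma predict_prob01 st x : 0 <= predict_prob st x <= 1.
Proof. by rewrite /predict_prob; case: ifP; rewrite ?lexx ?ler01. Qed.

Definition rank_learner : learner R X :=
  @Learner R X (fun hs => predict_prob (learner_state hs))
    (fun hs x => proj1 (andP (predict_prob01 _ x)))
    (fun hs x => proj2 (andP (predict_prob01 _ x))).

Lemma exploration_step V a x h D : ~ shatters V a D -> (0 < a)%N -> V h -> h x ->
  ~~ rank_drops (V, a) x ->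
  (0 < a.-1)%N /\ ~ shatters (restrict V x true) a.-1 (al_rank V a).-1.
Proof.
move=> nD a0 Vh hx; rewrite /rank_drops /= -leqNgt => nrd.
have Rh : restrict V x true h by [].
have n1 := restrict_true_not_shatters nD a0 (ex_intro _ h Rh) nrd.
by have a1 := not_shatters_width_gt0 x Rh n1; split.
Qed.

Definition state_inv h st :=
  [/\ st.1 h, (0 < st.2)%N, (st.2 <= w)%N & exists D, ~ shatters st.1 st.2 D].

Variable K : R.
Hypothesis K0 : 0 <= K.
Hypothesis epsK : (1 < w)%N -> 1 <= eps * K.

Definition potential st : R := (st.2.-1)%:R * K + (al_rank st.1 st.2)%:R.

Lemma state_inv_update h st x : state_inv h st -> state_inv h (update st (x, Some (h x))).
Proof.
case: st => V a [/= Vh a0 aw [D nD]] /=.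
have nDr y : ~ shatters (restrict V x y) a D by move/(shatters_sub (@restrict_sub _ _ _ _)).
case: ifP => [/andP[hx nrd]|_]; last by split=> //=; exists D.
have [a1 n1] := exploration_step nD a0 Vh hx nrd.
by split=> //=; [exact: leq_trans (leq_pred a) aw | exists (al_rank V a).-1].
Qed.

Lemma potential_update h st x : state_inv h st ->
  predict_prob st x * ((~~ h x)%:R + potential (update st (x, Some (h x))))
  + (1 - predict_prob st x) * ((h x)%:R + potential st) <= potential st + eps.
Proof.
case: st => V a [/= Vh a0 aw [D nD]]; have /andP[e0 e1] := eps01.
rewrite /predict_prob /potential /=.
set r := al_rank V a; set G := _ + r%:R.
have le_r y : (al_rank (restrict V x y) a <= r)%N := al_rank_sub (@restrict_sub _ V x y) nD.
case: (boolP (rank_drops (V, a) x)) => [rd|nrd] /=.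
  rewrite andbF subrr mul0r addr0 mul1r.
  have : (~~ h x + al_rank (restrict V x (h x)) a <= r)%N.
    by case: (h x) rd => /= rd; [rewrite le_r | rewrite add1n].
  by rewrite -(ler_nat R) natrD /G => ?; lra.
case hx: (h x) => /=.
- have [a1 n1] := exploration_step nD a0 Vh hx nrd.
  have lt_r : (al_rank (restrict V x true) a.-1 < r)%N.
    by apply: leq_ltn_trans (al_rank_le n1) _; rewrite ltn_predL (al_rank_gt0 x nD Vh).
  have : (al_rank (restrict V x true) a.-1)%:R + 1 <= r%:R :> R by rewrite natr1 ler_nat.
  have eaK : (a.-1)%:R * K = (a.-2)%:R * K + K.
    by rewrite -{1}(prednK a1) -natr1 mulrDl mul1r.
  set G' := _ + _%:R; move=> le_G'.
  have : eps * G' <= eps * (G - K - 1).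
    by apply: ler_wpM2l => //; rewrite /G /G' eaK; lra.
  have := epsK (ltac:(lia) : (1 < w)%N).
  rewrite /G; lra.
- have : (al_rank (restrict V x false) a)%:R <= r%:R :> R by rewrite ler_nat.
  set G' := _ + _%:R; move=> le_G'.
  have : eps * G' <= eps * G by apply: ler_wpM2l => //; rewrite /G /G'; lra.
  rewrite /G; lra.
Qed.

Lemma potential_ge0 st : 0 <= potential st.
Proof. by rewrite addr_ge0 ?mulr_ge0. Qed.

Lemma learner_state_rcons hs e :
  learner_state (rcons hs e) = update (learner_state hs) e.
Proof. by rewrite /learner_state foldl_rcons. Qed.

Lemma exp_mistakes_rank_learner h hs xs : state_inv h (learner_state hs) ->
  exp_mistakes rank_learner h hs xs <= potential (learner_state hs) + eps * (size xs)%:R.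
Proof.
elim: xs hs => [|x xs IH] hs inv /=; first by rewrite mulr0 addr0 potential_ge0.
have IHs := IH (rcons hs (x, Some (h x))).
rewrite learner_state_rcons in IHs; have {}IHs := IHs (state_inv_update x inv).
have IHn := IH (rcons hs (x, None)); rewrite learner_state_rcons in IHn.
have {}IHn := IHn inv.
apply: le_trans (ler_convex_comb (predict_prob01 _ x)
  (lerD (lexx _) IHs) (lerD (lexx _) IHn)) _.
have := potential_update x inv; rewrite -addn1 natrD; lra.
Qed.

Lemma opt_mistakes_le_width T D : (0 < w)%N -> ~ shatters H w D ->
  opt_mistakes R H T <= (w.-1)%:R * K + D%:R + eps * T%:R.
Proof.
move=> w0 nD; have /andP[e0 _] := eps01.
apply: le_trans (opt_mistakes_le_M H rank_learner T) _.
apply: M_le => [|h xs Hh <-]; first by rewrite !addr_ge0 ?mulr_ge0.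
apply: le_trans (@exp_mistakes_rank_learner h [::] xs _) _; first by split=> //; exists D.
by rewrite lerD2r lerD2l ler_nat (al_rank_le nD).
Qed.

End RankLearner.

Fixpoint bitseqs (m : nat) : seq (seq bool) :=
  if m is m'.+1 then [seq false :: s | s <- bitseqs m'] ++ [seq true :: s | s <- bitseqs m']
  else [:: [::]].

Lemma size_bitseqs m : size (bitseqs m) = (2 ^ m)%N.
Proof. by elim: m => //= m IH; rewrite size_cat !size_map IH expnS mul2n addnn. Qed.

Lemma bitseqs_size m s : s \in bitseqs m -> size s = m.
Proof.
elim: m s => [|m IH] s /=; first by rewrite inE => /eqP ->.
by rewrite mem_cat => /orP[] /mapP[t /IH <- ->].
Qed.

Section TreeWalk.
Variables (R : realType) (X : Type) (A : learner R X).

Fixpoint tree_walk (tr : seq bool -> X) (u s : seq bool) : seq (X * bool) :=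
  if s is b :: s' then (tr u, b) :: tree_walk tr (rcons u b) s' else [::].

Lemma size_tree_walk tr u s : size (tree_walk tr u s) = size s.
Proof. by elim: s u => //= b s IH u; rewrite IH. Qed.

Lemma tree_walk_consistent tr h u s :
  (forall i, (i < size s)%N -> h (tr (u ++ take i s)) = nth false s i) ->
  consistent h (tree_walk tr u s).
Proof.
elim: s u => //= b s IH u hs; apply/andP; split.
  by have := hs 0%N isT; rewrite take0 cats0 => ->.
by apply: IH => i lt_is; rewrite cat_rcons; exact: (hs i.+1).
Qed.

(* Each node is labelled 0 in half of the walks and 1 in the other half,
   so it contributes exactly one expected mistake per pair of walks. *)
Lemma sum_tree_walk_ge tr m u hs :
  (2 ^ m)%:R * (m%:R / 2) <= \sum_(s <- bitseqs m) lab_mistakes A hs (tree_walk tr u s).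
Proof.
elim: m u hs => [|m IH] u hs /=.
  by rewrite mul0r mulr0 big_cons big_nil addr0 lab_mistakes_ge0.
rewrite big_cat !big_map /= !(big_convex_comb (bitseqs m)) size_bitseqs.
have /andP[p0 p1] := lprob01 A hs (tr u).
have q0 : 0 <= 1 - A hs (tr u) by rewrite subr_ge0.
have IHp b := ler_wpM2l p0 (IH (rcons u b) (rcons hs (tr u, Some b))).
have IHq b := ler_wpM2l q0 (IH (rcons u b) (rcons hs (tr u, None))).
have := IHp false; have := IHp true; have := IHq false; have := IHq true.
have -> : (2 ^ m.+1)%:R * (m.+1%:R / 2) = (2 ^ m)%:R + 2 * ((2 ^ m)%:R * (m%:R / 2)) :> R.
  by rewrite expnS natrM -addn1 natrD; field.
lra.
Qed.

Lemma M_ge_half_width (H : set (X -> bool)) T d tr : (T <= d)%N -> shattered H T d tr ->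
  T%:R / 2 <= M A T H.
Proof.
move=> le_Td sh.
have /hasP[s s_in le_s] :
    has (fun s => T%:R / 2 <= lab_mistakes A [::] (tree_walk tr [::] s)) (bitseqs T).
  by apply: has_ge_average; rewrite size_bitseqs ?expn_gt0 // sum_tree_walk_ge.
have sT := bitseqs_size s_in.
have hs : prefixes_internal T d s.
  move=> i lt_is; rewrite sT in lt_is.
  rewrite /internal size_take sT lt_is (leq_trans lt_is le_Td) /=.
  by apply: leq_ltn_trans (count_size _ _) _; rewrite size_take sT lt_is.
have [h Hh hh] := shattered_prefix sh hs.
apply: le_trans le_s (lab_mistakes_le_M (tr [::]) _ Hh _ _).
  by apply: tree_walk_consistent => i /hh.
by rewrite size_tree_walk sT.
Qed.

End TreeWalk.

Section SpineLowerBound.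
Variables (R : realType) (X : Type) (A : learner R X) (k : nat).
Hypothesis k_gt0 : (0 < k)%N.
Local Notation L := (lab_mistakes A).
Local Notation kinv := (k%:R^-1 : R).

Lemma kinv_ge0 : 0 <= kinv.
Proof. by rewrite invr_ge0. Qed.

Lemma mulr_kinv : k%:R * kinv = 1.
Proof. by rewrite mulfV // pnatr_eq0 -lt0n. Qed.

(* Until it first predicts 1 on a block of k copies of c, the learner cannot tell the
   block labelled 0 from the block labelled 1: it either errs on the former or errs k
   times on the latter. Read with weights 1 and 1/k, each block forces one mistake. *)
Lemma block_ge (c : X) (Z : seq (X * bool)) (I : Type) (js : seq I)
    (P : I -> seq (X * bool)) (J : R) :
  (forall hs, J <= L hs Z + kinv * \sum_(j <- js) L hs (P j)) ->
  forall r, (r <= k)%N -> forall hs,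
  r%:R * kinv + J <= L hs (nseq r (c, false) ++ Z)
    + kinv * (L hs (nseq r (c, true)) + \sum_(j <- js) L hs (nseq r (c, false) ++ P j)).
Proof.
move=> base; elim=> [|r IH] le_rk hs; first by rewrite /= mul0r !add0r base.
have /andP[p0 p1] := lprob01 A hs c; have q0 : 0 <= 1 - A hs c by rewrite subr_ge0.
rewrite /= (big_convex_comb js (A hs c) 1 0
  (fun j => L (rcons hs (c, Some false)) (nseq r (c, false) ++ P j))
  (fun j => L (rcons hs (c, None)) (nseq r (c, false) ++ P j))) /=.
have IHS := IH (ltnW le_rk) (rcons hs (c, Some false)).
have IHN := IH (ltnW le_rk) (rcons hs (c, None)).
have PS := lab_mistakes_le_size A (rcons hs (c, Some false)) (nseq r (c, true)).
rewrite size_nseq in PS.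
have P1 := lab_mistakes_ge0 A (rcons hs (c, Some true)) (nseq r (c, true)).
have kPS := ler_wpM2l kinv_ge0 PS.
have kP1 := mulr_ge0 kinv_ge0 P1.
have kjs := mulr_ge0 kinv_ge0 (ler0n R (size js)).
have kr : r%:R * kinv + kinv <= 1.
  by rewrite -[X in _ + X]mul1r -mulrDl natr1 ler_pdivrMr ?ltr0n // mul1r ler_nat.
rewrite -natr1 mulrDl mul1r.
set ZS := L _ (nseq r (c, false) ++ Z) in IHS *.
set ZN := L _ (nseq r (c, false) ++ Z) in IHN *.
set QS := \sum_(j <- js) L (rcons hs (c, Some false)) _ in IHS *.
set QN := \sum_(j <- js) L (rcons hs (c, None)) _ in IHN *.
set PN := L (rcons hs (c, None)) (nseq r (c, true)) in IHN *.
set P1S := L (rcons hs (c, Some true)) (nseq r (c, true)) in P1 kP1 *.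
have b1 : r%:R * kinv + kinv + J <= 1 + ZS + kinv * (P1S + (size js)%:R + QS) by lra.
have b2 : r%:R * kinv + kinv + J <= ZN + kinv * (1 + PN + QN) by lra.
have := ler_wpM2l p0 b1; have := ler_wpM2l q0 b2; lra.
Qed.

Fixpoint zero_blocks (cs : seq X) : seq (X * bool) :=
  if cs is c :: cs' then nseq k (c, false) ++ zero_blocks cs' else [::].

Fixpoint probe (cs : seq X) (j : nat) : seq (X * bool) :=
  if cs is c :: cs' then
    if j is j'.+1 then nseq k (c, false) ++ probe cs' j' else nseq k (c, true)
  else [::].

Lemma zero_blocks_probes_ge cs hs :
  (size cs)%:R <= L hs (zero_blocks cs) + kinv * \sum_(0 <= j < size cs) L hs (probe cs j).
Proof.
elim: cs hs => [|c cs IH] hs; first by rewrite big_geq // mulr0 addr0.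
have := block_ge c IH (leqnn k) hs.
by rewrite mulr_kinv big_nat_recl // -natr1 addrC.
Qed.

Lemma size_zero_blocks cs : size (zero_blocks cs) = (k * size cs)%N.
Proof.
elim: cs => [|c cs IH]; first by rewrite muln0.
by rewrite /= size_cat size_nseq IH mulnS.
Qed.

Lemma size_probe_le cs j : (size (probe cs j) <= k * size cs)%N.
Proof.
by elim: cs j => [|c cs IH] [|j] //=;
  rewrite ?size_cat size_nseq mulnS ?leq_addr ?leq_add2l.
Qed.

Lemma zero_blocks_consistent h cs :
  all (fun c => ~~ h c) cs -> consistent h (zero_blocks cs).
Proof.
elim: cs => //= c cs IH /andP[hc /IH].
by rewrite /consistent all_cat all_nseq /= (negbTE hc) orbT.
Qed.

Lemma probe_consistent (x0 : X) h cs j : (j < size cs)%N ->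
  all (fun c => ~~ h c) (take j cs) -> h (nth x0 cs j) -> consistent h (probe cs j).
Proof.
elim: cs j => //= c cs IH [|j] /=.
  by rewrite /consistent all_nseq => _ _ /= ->; rewrite orbT.
rewrite ltnS => lt_j /andP[hc hcs] hj.
by rewrite /consistent all_cat all_nseq /= (negbTE hc) orbT /=; exact: IH.
Qed.

Lemma M_ge_half_spine (H : set (X -> bool)) T d tr : (k < d)%N -> (k * k <= T)%N ->
  shattered H 1 d tr -> k%:R / 2 <= M A T H.
Proof.
move=> lt_kd le_kkT sh.
pose c i := tr (nseq i false); pose cs := map c (iota 0 k).
have scs : size cs = k by rewrite size_map size_iota.
have key := zero_blocks_probes_ge cs [::]; rewrite scs in key.
have [le_Z|lt_Z] := leP (k%:R / 2) (L [::] (zero_blocks cs)).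
  have [h Hh [h0 _]] := shattered_spine false sh lt_kd.
  apply: le_trans le_Z (lab_mistakes_le_M (c 0%N) _ Hh _ _).
    apply: zero_blocks_consistent; rewrite all_map; apply/allP => i.
    by rewrite mem_iota => /andP[_ lt_ik] /=; rewrite h0.
  by rewrite size_zero_blocks scs.
have /hasP[j j_in le_P] : has (fun j => k%:R / 2 <= L [::] (probe cs j)) (index_iota 0 k).
  apply: has_ge_average; rewrite size_iota subn0 //.
  rewrite -[leRHS]mul1r -[in leRHS]mulr_kinv -mulrA; apply: ler_wpM2l => //; lra.
rewrite mem_index_iota /= in j_in.
have [h Hh [h_lt h_j]] := shattered_spine true sh (ltn_trans j_in lt_kd).
apply: le_trans le_P (lab_mistakes_le_M (c 0%N) _ Hh _ _); last first.
  by apply: leq_trans (size_probe_le _ _) _; rewrite scs.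
apply: (probe_consistent (x0 := c 0%N)); first by rewrite scs.
  rewrite -map_take take_iota all_map; apply/allP => i.
  by rewrite mem_iota => /andP[_ lt_ij] /=; rewrite h_lt //; lia.
by rewrite (nth_map 0%N) ?size_iota // nth_iota // h_j.
Qed.

End SpineLowerBound.

Lemma exists_isqrt (R : realType) T : (0 < T)%N ->
  exists k, [/\ (0 < k)%N, (k * k <= T)%N & Num.sqrt (T%:R : R) <= 2 * k%:R].
Proof.
have [k /andP[le_kkT lt_Tk]] : exists k, (k * k <= T < k.+1 * k.+1)%N.
  elim: T => [|T [k /andP[le_kkT lt_Tk]]]; first by exists 0%N.
  have [le|lt] := leqP (k.+1 * k.+1) T.+1; [exists k.+1 | exists k].
    by apply/andP; split; nia.
  by apply/andP; split; nia.
move=> T0; have k0 : (0 < k)%N by case: k le_kkT lt_Tk => // _ lt_T1; lia.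
exists k; split=> //.
set s := Num.sqrt (T%:R : R); have s0 : 0 <= s by exact: sqrtr_ge0.
have s2 : s ^+ 2 = T%:R by rewrite sqr_sqrtr ?ler0n.
have lt_Tk' : T%:R < (k%:R + 1) ^+ 2 :> R by rewrite natr1 -natrX ltr_nat expnS expn1.
have k1 : 1 <= k%:R :> R by rewrite ler1n.
nra.
Qed.

Section Rates.
Variables (R : realType) (X : Type) (H : set (X -> bool)).

Lemma eff_width_someP w : eff_width H = Some w ->
  [/\ (0 < w)%N, AL_finite H w & forall n, (0 < n)%N -> AL_finite H n -> (w <= n)%N].
Proof.
rewrite /eff_width; case: pselect => // ex [<-].
case: ex_minnP => m /asboolP[m0 ALm] minm; split => // n n0 ALn.
by apply: minm; apply/asboolP.
Qed.

Lemma eff_width_noneP : eff_width H = None -> forall w, (0 < w)%N -> ~ AL_finite H w.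
Proof.
rewrite /eff_width; case: pselect => // nex _ w w0 ALw.
by apply: nex; exists w; apply/asboolP.
Qed.

Lemma AL_finite_not_shatters w : AL_finite H w -> exists D, ~ shatters H w D.
Proof.
by move=> [D hD]; exists D.+1 => -[tr sh]; have := hD _ (ex_intro _ tr sh); rewrite ltnn.
Qed.

Lemma not_AL_finite_shattered w D : ~ AL_finite H w ->
  exists d tr, (D < d)%N /\ shattered H w d tr.
Proof.
move=> nAL; apply: contra_notP nAL => nex; exists D => d [tr sh].
by rewrite leqNgt; apply/negP => lt_Dd; apply: nex; exists d, tr.
Qed.

Lemma opt_mistakes_bigO1 : AL_finite H 1 -> bigO1 (opt_mistakes R H).
Proof.
move=> /AL_finite_not_shatters[D nD]; exists D.+1%:R; split; first by rewrite ltr0n.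
exists 0%N => T _; have e01 : 0 <= (0 : R) <= 1 by rewrite lexx ler01.
have epsK : (1 < 1)%N -> 1 <= 0 * (0 : R) by [].
apply: le_trans (opt_mistakes_le_width e01 (lexx 0) epsK T isT nD) _.
by rewrite mulr0 !mul0r add0r addr0 ler_nat.
Qed.

Lemma opt_mistakes_Theta_sqrt w : (0 < w)%N -> AL_finite H w -> ~ AL_finite H 1 ->
  bigTheta (opt_mistakes R H) (fun T => Num.sqrt T%:R).
Proof.
move=> w0 /AL_finite_not_shatters[D nD] nAL1.
exists (1 / 4), (w + D)%:R; split; [lra | by rewrite ltr0n addn_gt0 w0 |].
exists 1%N => T T1; set s := Num.sqrt T%:R.
have s1 : 1 <= s by rewrite -sqrtr1 ler_sqrt ?ler1n.
have s0 : 0 < s by exact: lt_le_trans ltr01 s1.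
apply/andP; split.
  have [k [k0 le_kkT sk]] := exists_isqrt R T1.
  have [d [tr [lt_kd sh]]] := not_AL_finite_shattered k nAL1.
  apply: le_trans (opt_mistakes_ge (fun A => M_ge_half_spine A k0 lt_kd le_kkT sh)).
  by rewrite -/s in sk; lra.
have e01 : 0 <= s^-1 <= 1 by rewrite invr_ge0 ltW //= invr_le1 ?unitf_gt0.
have epsK : (1 < w)%N -> 1 <= s^-1 * s by rewrite mulVf ?gt_eqF.
apply: le_trans (opt_mistakes_le_width e01 (ltW s0) epsK T w0 nD) _.
have -> : s^-1 * T%:R = s by rewrite -[T%:R]sqr_sqrtr ?ler0n // expr2 mulKf ?gt_eqF.
have Ds : D%:R <= D%:R * s by rewrite ler_peMr ?ler0n.
have ew : w%:R = (w.-1)%:R + 1 :> R by rewrite natr1 prednK.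
by rewrite natrD ew !mulrDl mul1r; lra.
Qed.

Lemma opt_mistakes_Theta_lin : (forall w, (0 < w)%N -> ~ AL_finite H w) ->
  bigTheta (opt_mistakes R H) (fun T => T%:R).
Proof.
move=> nAL; exists (1 / 2), 1; split; [lra | lra |].
exists 1%N => T T1; apply/andP; split.
  have [d [tr [lt_Td sh]]] := not_AL_finite_shattered T (nAL T T1).
  rewrite mul1r mulrC.
  exact: opt_mistakes_ge (fun A => M_ge_half_width A (ltnW lt_Td) sh).
rewrite mul1r; exact: le_trans (opt_mistakes_le_M H (zero_learner R X) T) (M_le_horizon _ _ _).
Qed.

End Rates.

Theorem corollary1 (R : realType) (X : Type) (H : set (X -> bool)) :
  [/\ eff_width H = Some 1%N -> bigO1 (opt_mistakes R H),
      forall w : nat, eff_width H = Some w -> (2 <= w)%N ->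
        bigTheta (opt_mistakes R H) (fun T => Num.sqrt (T%:R : R)) &
      eff_width H = None -> bigTheta (opt_mistakes R H) (fun T => (T%:R : R))].
Proof.
split.
- by move=> /eff_width_someP[_ AL1 _]; exact: opt_mistakes_bigO1.
- move=> w /eff_width_someP[w0 ALw minw] w2; apply: opt_mistakes_Theta_sqrt w0 ALw _.
  by move=> /(minw 1%N isT); rewrite leqNgt w2.
- by move/eff_width_noneP; exact: opt_mistakes_Theta_lin.
Qed.
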